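(* For any feasible solution $(f,x_1^*,\dots,x_n^* )$ of the reward-design problem, there exists a feasible solution $(f,x_1',\dots,x_n')$ (with the same $f$) such that $x_1'\le x_2'\le\cdots\le x_n'$ and $\sum_{i=1}^n x_i'\ge\sum_{i=1}^n x_i^*$.
   Context: There are $n$ agents with types $0<q_1\le q_2\le\cdots\le q_n$, a cost constant $C>0$ and a budget $B>0$. A reward function is a map $f:[0,\infty)\to[0,\infty)$; agent $i$'s utility for producing quality $x$ is $u_i(x)=f(x)-xC/q_i$. A tuple $(f,x_1^*,\dots,x_n^* )$ is a feasible solution of the reward-design problem if for each $i$: $0\le x_i^*\le q_i$ and $u_i(x_i^* )\ge u_i(x)$ for all $x\in[0,q_i]$, and moreover $\sum_{i=1}^n f(x_i^* )\le B$. The objective is to maximize $\sum_i x_i^*$. *)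

From Stdlib Require Import Reals.
Open Scope R_scope.

Definition utility (C : R) (f : R -> R) (qi x : R) : R := f x - x * C / qi.

Fixpoint sumR (n : nat) (a : nat -> R) : R :=
  match n with
  | O => 0
  | S m => sumR m a + a m
  end.

Definition feasible (n : nat) (q : nat -> R) (C B : R) (f : R -> R) (x : nat -> R) : Prop :=
  (forall i, (i < n)%nat ->
     0 <= x i <= q i /\
     forall y, 0 <= y <= q i -> utility C f (q i) (x i) >= utility C f (q i) y) /\
  sumR n (fun i => f (x i)) <= B.

(* If q_i < q_j, any best response of type q_i is at most any best response of
   type q_j: adding the two optimality inequalities gives
   (x_j - x_i) (C/q_i - C/q_j) >= 0.  Hence an inverted adjacent pair
   x_{k+1} < x_k only occurs between agents of equal type, and swapping the two
   efforts keeps everybody at a best response while preserving both the total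
   quality and the total payment.  Bubble sort by such swaps therefore yields a
   sorted feasible solution with the same total quality. *)

From Stdlib Require Import Reals Lra Lia.
Open Scope R_scope.

Lemma sumR_ext (N : nat) (a b : nat -> R) :
  (forall k, (k < N)%nat -> a k = b k) -> sumR N a = sumR N b.
Proof.
  induction N as [|N IH]; simpl; intros Hab; [reflexivity|].
  rewrite IH by (intros; apply Hab; lia).
  rewrite Hab by lia. reflexivity.
Qed.

Definition swap_adj (k : nat) (x : nat -> R) : nat -> R :=
  fun i => if Nat.eqb i k then x (S k) else if Nat.eqb i (S k) then x k else x i.

Lemma swap_adj_l (k : nat) (x : nat -> R) : swap_adj k x k = x (S k).
Proof. unfold swap_adj. now rewrite Nat.eqb_refl. Qed.

Lemma swap_adj_r (k : nat) (x : nat -> R) : swap_adj k x (S k) = x k.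
Proof.
  unfold swap_adj. destruct (Nat.eqb_spec (S k) k); [lia|].
  now rewrite Nat.eqb_refl.
Qed.

Lemma swap_adj_other (k i : nat) (x : nat -> R) :
  i <> k -> i <> S k -> swap_adj k x i = x i.
Proof.
  intros Hk HSk. unfold swap_adj.
  destruct (Nat.eqb_spec i k); [lia|].
  destruct (Nat.eqb_spec i (S k)); [lia|reflexivity].
Qed.

Lemma sumR_swap_adj (N k : nat) (g : R -> R) (x : nat -> R) :
  (S k < N)%nat ->
  sumR N (fun i => g (swap_adj k x i)) = sumR N (fun i => g (x i)).
Proof.
  induction N as [|N IH]; intros HkN; [lia|]. simpl.
  destruct (Nat.eq_dec N (S k)) as [->|HN].
  - simpl. rewrite swap_adj_l, swap_adj_r.
    rewrite (sumR_ext k _ (fun i => g (x i)))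
      by (intros i Hi; rewrite swap_adj_other by lia; reflexivity).
    lra.
  - rewrite IH by lia. rewrite swap_adj_other by lia. reflexivity.
Qed.

Definition sorted_upto (m : nat) (x : nat -> R) : Prop :=
  forall i j, (i <= j < m)%nat -> x i <= x j.

Lemma bubble_max (P : (nat -> R) -> Prop) (m : nat) :
  (forall x k, P x -> (S k <= m)%nat -> x (S k) < x k -> P (swap_adj k x)) ->
  forall x, P x -> exists y, P y /\ forall k, (k <= m)%nat -> y k <= y m.
Proof.
  induction m as [|m IH]; intros Hswap x Hx.
  - exists x. split; [exact Hx|]. intros k Hk.
    replace k with 0%nat by lia. lra.
  - destruct (IH (fun z k Hz Hk => Hswap z k Hz ltac:(lia)) x Hx)
      as (y & Hy & Hmax).
    destruct (Rle_lt_dec (y m) (y (S m))) as [Hle|Hlt].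
    + exists y. split; [exact Hy|]. intros k Hk.
      destruct (Nat.eq_dec k (S m)) as [->|Hk']; [lra|].
      apply Rle_trans with (y m); [apply Hmax; lia|exact Hle].
    + exists (swap_adj m y). split; [apply Hswap; auto|].
      intros k Hk. rewrite swap_adj_r.
      destruct (Nat.eq_dec k m) as [->|Hkm]; [rewrite swap_adj_l; lra|].
      destruct (Nat.eq_dec k (S m)) as [->|HkSm]; [rewrite swap_adj_r; lra|].
      rewrite swap_adj_other by lia. apply Hmax; lia.
Qed.

Lemma sort_by_adjacent_swaps (m : nat) : forall P : (nat -> R) -> Prop,
  (forall x k, P x -> (S k < m)%nat -> x (S k) < x k -> P (swap_adj k x)) ->
  forall x, P x -> exists y, P y /\ sorted_upto m y.
Proof.
  induction m as [|m IH]; intros P Hswap x Hx.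
  - exists x. split; [exact Hx|]. intros i j Hij. lia.
  - destruct (bubble_max P m (fun z k Hz Hk => Hswap z k Hz ltac:(lia)) x Hx)
      as (y & Hy & Hmax).
    set (P' := fun z => P z /\ forall k, (k < m)%nat -> z k <= z m).
    assert (Hswap' : forall z k, P' z -> (S k < m)%nat -> z (S k) < z k ->
                     P' (swap_adj k z)).
    { intros z k [Hz Hzmax] Hk Hinv. split; [apply Hswap; auto|].
      rewrite (swap_adj_other k m) by lia. intros i Hi.
      destruct (Nat.eq_dec i k) as [->|Hik]; [rewrite swap_adj_l; apply Hzmax; lia|].
      destruct (Nat.eq_dec i (S k)) as [->|HiSk]; [rewrite swap_adj_r; apply Hzmax; lia|].
      rewrite swap_adj_other by lia. apply Hzmax; exact Hi. }
    assert (Hy' : P' y) by (split; [exact Hy|intros k Hk; apply Hmax; lia]).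
    destruct (IH P' Hswap' y Hy') as (z & [Hz Hzmax] & Hsorted).
    exists z. split; [exact Hz|]. intros i j Hij.
    destruct (Nat.eq_dec j m) as [->|Hjm].
    + destruct (Nat.eq_dec i m) as [->|Him]; [lra|]. apply Hzmax; lia.
    + apply Hsorted; lia.
Qed.

Definition optimal_effort (C : R) (f : R -> R) (qi v : R) : Prop :=
  0 <= v <= qi /\ forall y, 0 <= y <= qi -> utility C f qi v >= utility C f qi y.

Lemma optimal_effort_monotone (C : R) (f : R -> R) (qi qj a b : R) :
  0 < C -> 0 < qi -> qi < qj ->
  optimal_effort C f qi a -> optimal_effort C f qj b -> a <= b.
Proof.
  intros HC Hqi Hqij [[Ha0 Haq] Ha] [[Hb0 Hbq] Hb].
  apply Rnot_lt_le. intros Hba.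
  specialize (Ha b ltac:(lra)). specialize (Hb a ltac:(lra)).
  unfold utility in Ha, Hb.
  assert (Hcost : C / qj < C / qi).
  { apply Rmult_lt_compat_l; [lra|]. apply Rinv_lt_contravar; nra. }
  replace (a * C / qi) with (a * (C / qi)) in Ha by (field; lra).
  replace (b * C / qi) with (b * (C / qi)) in Ha by (field; lra).
  replace (a * C / qj) with (a * (C / qj)) in Hb by (field; lra).
  replace (b * C / qj) with (b * (C / qj)) in Hb by (field; lra).
  nra.
Qed.

Section SortedTypes.
Variables (n : nat) (q : nat -> R) (C : R) (f : R -> R).
Hypothesis hq_pos : forall i, (i < n)%nat -> 0 < q i.
Hypothesis hq_sorted : forall i j, (i <= j < n)%nat -> q i <= q j.
Hypothesis hC : 0 < C.

Definition optimal_profile (x : nat -> R) : Prop :=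
  forall i, (i < n)%nat -> optimal_effort C f (q i) (x i).

Lemma optimal_profile_swap_adj (x : nat -> R) (k : nat) :
  (S k < n)%nat -> x (S k) < x k ->
  optimal_profile x -> optimal_profile (swap_adj k x).
Proof.
  intros Hk Hinv Hx.
  assert (Hq : q k = q (S k)).
  { destruct (Rle_lt_or_eq_dec _ _ (hq_sorted k (S k) ltac:(lia))) as [Hlt|Heq];
      [|exact Heq].
    exfalso. apply (Rlt_not_le _ _ Hinv).
    apply (optimal_effort_monotone C f (q k) (q (S k)));
      [exact hC|apply hq_pos; lia|exact Hlt|apply Hx; lia|apply Hx; lia]. }
  intros i Hi.
  destruct (Nat.eq_dec i k) as [->|Hik].
  { rewrite swap_adj_l, Hq. apply Hx; exact Hk. }
  destruct (Nat.eq_dec i (S k)) as [->|HiSk].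
  { rewrite swap_adj_r, <- Hq. apply Hx; lia. }
  rewrite swap_adj_other by assumption. apply Hx; exact Hi.
Qed.

End SortedTypes.

Theorem lemma1 (n : nat) (q : nat -> R) (C B : R)
  (hq_pos : forall i, (i < n)%nat -> 0 < q i)
  (hq_sorted : forall i j, (i <= j < n)%nat -> q i <= q j)
  (hC : 0 < C) (hB : 0 < B)
  (f : R -> R) (hf : forall x, 0 <= x -> 0 <= f x)
  (xs : nat -> R) (hfeas : feasible n q C B f xs) :
  exists x' : nat -> R,
    feasible n q C B f x' /\
    (forall i j, (i <= j < n)%nat -> x' i <= x' j) /\
    sumR n x' >= sumR n xs.
Proof.
  destruct hfeas as [Hopt Hbudget].
  set (P := fun x => optimal_profile n q C f x /\
                     sumR n x = sumR n xs /\
                     sumR n (fun i => f (x i)) = sumR n (fun i => f (xs i))).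
  assert (HP : forall x k, P x -> (S k < n)%nat -> x (S k) < x k ->
               P (swap_adj k x)).
  { intros x k (Hx & Hsum & Hpay) Hk Hinv. split; [|split].
    - apply optimal_profile_swap_adj; assumption.
    - rewrite <- Hsum. exact (sumR_swap_adj n k (fun v => v) x Hk).
    - rewrite <- Hpay. exact (sumR_swap_adj n k f x Hk). }
  destruct (sort_by_adjacent_swaps n P HP xs (conj Hopt (conj eq_refl eq_refl)))
    as (x' & (Hx' & Hsum & Hpay) & Hsorted).
  exists x'. split; [split|split].
  - exact Hx'.
  - rewrite Hpay. exact Hbudget.
  - exact Hsorted.
  - rewrite Hsum. apply Rle_refl.
Qed.
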